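(* (1) For every integer $n\ge 2$, $\min\{e(i): 2^{n-1}\le i\le 2^{n}\}=\lfloor n/2\rfloor$. (2) For every integer $n\ge 1$, $\max\{e(i): 2^{n-1}\le i\le 2^{n}\}=n$. (3) For every integer $n\ge 0$, $\min\{i\ge 1: e(i)=n\}=2^{n}$. (4) For every integer $n\ge 0$, $\max\{i\ge 1: e(i)=n\}=\dfrac{4^{n+1}-1}{3}$.
   Context: The Stern polynomials $B_n(t)\in\mathbb{Z}[t]$, $n\ge 0$, are defined by $B_0(t)=0$, $B_1(t)=1$, $B_{2n}(t)=tB_n(t)$ and $B_{2n+1}(t)=B_n(t)+B_{n+1}(t)$ for $n\ge 1$. For $n\ge 1$, $e(n)=\deg_t B_n(t)$. *)

From HB Require Import structures.
From mathcomp Require Import all_boot all_order all_algebra.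
Set Implicit Arguments. Unset Strict Implicit. Unset Printing Implicit Defensive.
Import GRing.Theory.
Local Open Scope ring_scope.

(* Fuel-based definition; fuel k suffices for all n <= k. *)
Fixpoint stern_aux (k : nat) (n : nat) : {poly int} :=
  match k with
  | 0%N => 0
  | k'.+1 =>
    if n == 0%N then 0
    else if n == 1%N then 1
    else if ~~ odd n then 'X * stern_aux k' n./2
    else stern_aux k' n./2 + stern_aux k' (n./2).+1
  end.

Definition stern (n : nat) : {poly int} := stern_aux n n.

(* e(n) = deg_t B_n(t) (for n >= 1, B_n <> 0); size = degree + 1. *)
Definition e (n : nat) : nat := (size (stern n)).-1.

From mathcomp Require Import all_boot all_order all_algebra.
From mathcomp Require Import zify.
Import GRing.Theory Num.Theory.

(* The whole argument runs on two recurrences for e, read off from those of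
   the Stern polynomials:  e(2m) = e(m) + 1  and  e(2m+1) = max(e(m), e(m+1)).
   The second one holds because all coefficients of every B_n are
   nonnegative, so no cancellation of leading terms can occur in a sum.
   From these recurrences, by strong induction on i:
   - e(i) <= k whenever 1 <= i <= 2^k, and e(i) < k whenever 1 <= i < 2^k;
     with e(2^n) = n this gives parts (2) and (3);
   - for the numbers a(n) = (4^(n+1)-1)/3 (a(0) = 1, a(n+1) = 4a(n)+1), with
     binary expansion 1010...101, we have e(a(n)) = n, e(a(n)+1) = n+1, and
     e(i) > n for every i > a(n); this gives part (4), and, since a(n) lies in
     [2^(2n), 2^(2n+1)), also the lower bound and the witnesses of part (1).
   The file first unfolds the fuel-based definition of the Stern polynomials,
   then derives the recurrences for e, then proves the bounds above. *)

Section SternRecurrence.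
Local Open Scope ring_scope.

Lemma stern_aux_fuel k k' n :
  (n <= k)%N -> (n <= k')%N -> stern_aux k n = stern_aux k' n.
Proof.
elim: k k' n => [|k IH] [|k'] n //=; rewrite ?leqn0.
- by move=> /eqP ->.
- by move=> _ /eqP ->.
move=> hk hk'; case: eqP => // /eqP n0; case: eqP => // /eqP n1.
have n_half : n = (odd n + n./2.*2)%N by rewrite odd_double_half.
case: ifP => hodd; first by rewrite (IH k') //; lia.
by rewrite (IH k' n./2) ?(IH k' n./2.+1) //; move/negbFE: hodd n_half => ->; lia.
Qed.

Lemma stern_aux_S k n : stern_aux k.+1 n =
  if n == 0%N then 0
  else if n == 1%N then 1
  else if ~~ odd n then 'X * stern_aux k n./2
  else stern_aux k n./2 + stern_aux k n./2.+1.
Proof. by []. Qed.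

Lemma stern_rec n : (2 <= n)%N -> stern n =
  if ~~ odd n then 'X * stern n./2 else stern n./2 + stern n./2.+1.
Proof.
case: n => [//|k] hk; rewrite /stern stern_aux_S.
rewrite (_ : k.+1 == 0%N = false) // (_ : k.+1 == 1%N = false); last by lia.
have n_half : k.+1 = (odd k.+1 + k.+1./2.*2)%N by rewrite odd_double_half.
case: ifP => hodd; first by rewrite (stern_aux_fuel k (k.+1./2)) //; lia.
by rewrite (stern_aux_fuel k (k.+1./2)) ?(stern_aux_fuel k (k.+1./2.+1)) //;
  move/negbFE: hodd n_half => ->; lia.
Qed.

Lemma stern_even m : (1 <= m)%N -> stern (2 * m) = 'X * stern m.
Proof. by move=> hm; rewrite stern_rec ?oddM /= ?mul2n ?doubleK //; lia. Qed.

Lemma stern_odd m : (1 <= m)%N -> stern (2 * m).+1 = stern m + stern m.+1.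
Proof. by move=> hm; rewrite stern_rec /= ?oddM /= ?mul2n ?uphalf_double //; lia. Qed.

Definition nonneg_coefs {R : numDomainType} (p : {poly R}) := forall i, 0 <= p`_i.

Lemma size_add_nonneg_l {R : numDomainType} (p q : {poly R}) :
  nonneg_coefs p -> nonneg_coefs q -> (size q <= size p)%N ->
  size (p + q) = size p.
Proof.
move=> hp hq hqp; apply/eqP; rewrite eqn_leq.
rewrite (leq_trans (size_polyD p q)) ?geq_max ?leqnn ?hqp //=.
case sp: (size p) => [//|k]; rewrite ltnNge; apply/negP => /leq_sizeP /(_ k (leqnn _)).
rewrite coefD => /eqP; rewrite paddr_eq0 ?hp ?hq // => /andP [/eqP pk0 _].
have : lead_coef p == 0 by rewrite lead_coefE sp /= pk0.
by rewrite lead_coef_eq0 => /eqP p0; rewrite p0 size_poly0 in sp.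
Qed.

Lemma size_add_nonneg {R : numDomainType} (p q : {poly R}) :
  nonneg_coefs p -> nonneg_coefs q -> size (p + q) = maxn (size p) (size q).
Proof.
move=> hp hq; case: (leqP (size q) (size p)) => hqp.
  exact: size_add_nonneg_l.
by rewrite addrC size_add_nonneg_l // ltnW.
Qed.

Lemma stern_nonneg_nonzero n :
  nonneg_coefs (stern n) /\ ((1 <= n)%N -> stern n != 0).
Proof.
elim/ltn_ind: n => -[|[|k]] IH.
- by split=> // i; rewrite coef0.
- by split=> [i|]; rewrite ?oner_eq0 // coefC; case: (i == 0)%N.
have n_half : k.+2 = (odd k.+2 + k.+2./2.*2)%N by rewrite odd_double_half.
set m := k.+2./2 in n_half *.
have [nn_m nz_m] := IH m ltac:(lia); have {}nz_m := nz_m ltac:(lia).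
case: (odd k.+2) n_half => /= n_half.
- have [nn_m1 nz_m1] := IH m.+1 ltac:(lia); have {}nz_m1 := nz_m1 isT.
  have -> : k.+2 = (2 * m).+1 by lia.
  rewrite stern_odd; last by lia.
  split=> [i|_]; first by rewrite coefD addr_ge0.
  rewrite -size_poly_eq0 size_add_nonneg // -lt0n leq_max.
  by rewrite lt0n size_poly_eq0 nz_m.
- have -> : k.+2 = (2 * m)%N by lia.
  rewrite stern_even; last by lia.
  split=> [i|_]; first by rewrite coefXM; case: (i == 0)%N.
  by rewrite mulf_neq0 ?polyX_eq0.
Qed.

End SternRecurrence.

Lemma e1 : e 1 = 0.
Proof. by rewrite /e size_poly1. Qed.

Lemma e_even m : 1 <= m -> e (2 * m) = (e m).+1.
Proof.
move=> hm; have [_ /(_ hm) nz_m] := stern_nonneg_nonzero m.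
rewrite /e stern_even // -commr_polyX size_mulX //.
by move: nz_m; rewrite -size_poly_eq0; case: (size _).
Qed.

Lemma e_odd m : 1 <= m -> e (2 * m).+1 = maxn (e m) (e m.+1).
Proof.
move=> hm; have [nn_m /(_ hm) nz_m] := stern_nonneg_nonzero m.
have [nn_m1 /(_ isT) nz_m1] := stern_nonneg_nonzero m.+1.
rewrite /e stern_odd // size_add_nonneg //.
move: nz_m nz_m1; rewrite -!size_poly_eq0.
by case: (size (stern m)) => // a; case: (size (stern m.+1)) => // b; rewrite maxnSS.
Qed.

Lemma half_split i :
  2 <= i -> exists2 m, 1 <= m < i & i = 2 * m \/ i = (2 * m).+1.
Proof.
move=> hi; have := odd_double_half i; rewrite -addnn => i_half.
by exists i./2; case: (odd i) i_half => /= i_half; lia.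
Qed.

Lemma e_pow2 n : e (2 ^ n) = n.
Proof.
elim: n => [|n IH]; first by rewrite e1.
by rewrite expnS e_even ?IH // expn_gt0.
Qed.

Lemma e_le i k : 1 <= i <= 2 ^ k -> e i <= k.
Proof.
elim/ltn_ind: i k => i IH k hi.
have [i_le1 | /half_split [m hm [] i_eq]] := leqP i 1.
  by rewrite (_ : i = 1) ?e1 //; lia.
all: subst i; case: k hi => [|k]; rewrite ?expn0 ?expnS => hi; first by lia.
- by rewrite e_even ?ltnS ?IH //; lia.
- have e_m : e m <= k by apply: IH; lia.
  have e_m1 : e m.+1 <= k by apply: IH; lia.
  by rewrite e_odd ?geq_max; lia.
Qed.

Lemma e_lt i k : 1 <= i < 2 ^ k -> e i < k.
Proof.
elim/ltn_ind: i k => i IH k hi.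
case: k hi => [|k]; rewrite ?expn0 ?expnS => hi; first by lia.
have [i_le1 | /half_split [m hm [] i_eq]] := leqP i 1.
  by rewrite (_ : i = 1) ?e1 //; lia.
all: subst i.
- by rewrite e_even ?ltnS ?IH //; lia.
- by rewrite e_odd ?ltnS ?geq_max ?e_le //; lia.
Qed.

(* a(n) = 1 + 4 + ... + 4^n = (4^(n+1)-1)/3, binary 1010...101. *)
Fixpoint a (n : nat) : nat := if n is n'.+1 then 4 * a n' + 1 else 1.

Lemma a_pos n : 0 < a n.
Proof. by case: n => //= n; lia. Qed.

Lemma a_closed n : a n = (4 ^ n.+1 - 1) %/ 3.
Proof.
suff a3 : 3 * a n + 1 = 4 ^ n.+1 by rewrite -a3 addnK mulKn.
by elim: n => //= n IH; rewrite expnS -IH; lia.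
Qed.

Lemma a_bounds n : 2 ^ (2 * n) <= a n < 2 ^ (2 * n).+1.
Proof.
elim: n => [|n IH] //=; rewrite mulnS !expnS in IH *; lia.
Qed.

Lemma e_a n : e (a n) = n /\ e (a n).+1 = n.+1.
Proof.
elim: n => [|n [IH IH1]]; first by rewrite e1 -[2]/(2 * 1) e_even // e1.
have hp := a_pos n.
have e_mid : e (2 * a n).+1 = n.+1 by rewrite e_odd // IH IH1; lia.
rewrite /=; have -> : (4 * a n + 1).+1 = 2 * (2 * a n).+1 by lia.
have -> : 4 * a n + 1 = (2 * (2 * a n)).+1 by lia.
by rewrite e_odd ?e_even ?IH ?e_mid ?maxnn //; lia.
Qed.

Lemma e_gt i n : a n < i -> n < e i.
Proof.
elim/ltn_ind: i n => i IH n hi.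
have /half_split [m /andP [m_pos m_lt] [] i_eq] : 2 <= i.
  by move: (a_pos n); lia.
all: subst i; case: n hi => [|n] /= hi.
- by rewrite e_even //; lia.
- by rewrite e_even ?ltnS ?(IH m) //; lia.
- by rewrite e_odd // leq_max (IH m.+1) ?orbT //; lia.
- rewrite e_odd // leq_max.
  have /half_split [p hp [] m_eq] : 2 <= m by move: (a_pos n); lia.
  + by rewrite m_eq e_even ?ltnS ?(IH p) //; lia.
  + by rewrite (_ : m.+1 = 2 * p.+1) ?e_even ?ltnS ?(IH p.+1) ?orbT //; lia.
Qed.

(* Part (1), attained: some i in [2^(n-1), 2^n] has e(i) = floor(n/2),
   namely a(m) for n = 2m+1 and 2a(m-1)+1 for n = 2m. *)
Lemma e_half_attained n :
  2 <= n -> exists2 i, 2 ^ n.-1 <= i <= 2 ^ n & e i = n./2.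
Proof.
move=> /half_split [[|j] // _ [] ->].
- exists (2 * a j).+1; last by rewrite e_odd ?a_pos //; case: (e_a j) => -> ->; lia.
  by have := a_bounds j; rewrite (_ : (2 * j.+1).-1 = (2 * j).+1) ?mulnS ?expnS; lia.
- exists (a j.+1); last by case: (e_a j.+1) => ->; lia.
  by have := a_bounds j.+1; rewrite expnS /=; lia.
Qed.

(* Part (1), lower bound: from 2^(n-1) on, the degree is at least floor(n/2),
   because 2^(n-1) already exceeds a(floor(n/2) - 1). *)
Lemma e_half_lower n i : 2 ^ n.-1 <= i -> n./2 <= e i.
Proof.
case hn: n./2 => [//|j] hi; apply: e_gt.
have pow_le : 2 ^ (2 * j).+1 <= 2 ^ n.-1 by rewrite leq_pexp2l //; lia.
by have := a_bounds j; lia.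
Qed.

Lemma pow2_le_of_e i n : 1 <= i -> e i = n -> 2 ^ n <= i.
Proof.
move=> hi hei; rewrite leqNgt; apply/negP => hlt.
by have := e_lt i n; rewrite hi hlt hei ltnn => /(_ isT).
Qed.

Lemma le_a_of_e i n : e i = n -> i <= a n.
Proof. by move=> hei; rewrite leqNgt; apply/negP => /e_gt; rewrite hei ltnn. Qed.

Theorem theorem4p3 :
  (forall n : nat, (2 <= n)%N ->
     (exists2 i, (2 ^ n.-1 <= i <= 2 ^ n)%N & e i = n./2) /\
     (forall i, (2 ^ n.-1 <= i <= 2 ^ n)%N -> (n./2 <= e i)%N)) /\
  (forall n : nat, (1 <= n)%N ->
     (exists2 i, (2 ^ n.-1 <= i <= 2 ^ n)%N & e i = n) /\
     (forall i, (2 ^ n.-1 <= i <= 2 ^ n)%N -> (e i <= n)%N)) /\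
  (forall n : nat,
     e (2 ^ n) = n /\ (forall i, (1 <= i)%N -> e i = n -> (2 ^ n <= i)%N)) /\
  (forall n : nat,
     e ((4 ^ n.+1 - 1) %/ 3) = n /\
     (forall i, (1 <= i)%N -> e i = n -> (i <= (4 ^ n.+1 - 1) %/ 3)%N)).
Proof.
split; [|split; [|split]].
- move=> n hn; split; first exact: e_half_attained.
  by move=> i /andP [hi _]; apply: e_half_lower.
- move=> n hn; split.
    by exists (2 ^ n); rewrite ?e_pow2 ?leqnn ?andbT ?leq_pexp2l ?leq_pred.
  move=> i /andP [hi hi2]; apply: e_le.
  by rewrite hi2 andbT (leq_trans _ hi) ?expn_gt0.
- by move=> n; split=> [|i]; [exact: e_pow2 | exact: pow2_le_of_e].
- move=> n; rewrite -a_closed; split; first by case: (e_a n).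
  by move=> i _; apply: le_a_of_e.
Qed.
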